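(* Let $\mathcal{M}$ be a CTMC with state space $S$, nonnegative reward function $\rho\colon S\to\mathbb{R}_{\geq0}$, and a unique absorbing goal state $g$ with $\rho(g)>0$. Let $s\in S$ with $\rho(s)=0$ and $P(s,s)\in(0,1)$. Let $\mathcal{M}^*$ be as $\mathcal{M}$ except that $P^{\mathcal{M}^*}(s,s)=0$ and $P^{\mathcal{M}^*}(s,s')=\frac{P^{\mathcal{M}}(s,s')}{1-P^{\mathcal{M}}(s,s)}$ for all $s'\neq s$. Then $\mathrm{Pr}^{\mathcal{M}}_s(\lozenge_{\leq r}g)=\mathrm{Pr}^{\mathcal{M}^*}_s(\lozenge_{\leq r}g)$ for all $r\geq0$.
   Context: A CTMC has finite state set $S$, transition probabilities $P\colon S\to\mathrm{Distr}(S)$, exit rates $E\colon S\to\mathbb{R}_{>0}$, an initial state and a labeling. A timed path is $\sigma=s_0t_0s_1t_1\dots$ with $t_i>0$ the residence time in $s_i$ (exponential with rate $E(s_i)$; then a jump to $s_{i+1}$ with probability $P(s_i,s_{i+1})$). $\sigma@t=s_m$ for $m$ the smallest index with $t\leq\sum_{i=0}^mt_i$. Cumulative reward until $t$: $\rho(\sigma,t)=\sum_{j=0}^{m-1}t_j\rho(s_j)+(t-\sum_{j=0}^{m-1}t_j)\rho(s_m)$ where $\sigma@t=s_m$. $\mathrm{Pr}^{\mathcal{M}}_s(\lozenge_{\leq r}g)$ is the probability that $\mathcal{M}$ started in $s$ reaches $g$ while having accumulated reward at most $r$. *)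

From HB Require Import structures.
From mathcomp Require Import all_boot all_order all_algebra.
From mathcomp Require Import all_classical all_reals all_analysis.
From mathcomp Require Import exponential_distribution.
Set Implicit Arguments. Unset Strict Implicit. Unset Printing Implicit Defensive.
Import Order.TTheory GRing.Theory Num.Theory.
Local Open Scope classical_set_scope.
Local Open Scope ring_scope.

Section CTMC.
Context {R : realType} {S : finType}.

(** A CTMC (transition probabilities P, exit rates E); initial state and
    labeling are irrelevant for the statement (the start state is a parameter,
    the goal is the state g). *)
Definition is_ctmc (P : S -> S -> R) (E : S -> R) : Prop :=
  [/\ (forall u v, 0 <= P u v), (forall u, \sum_(v : S) P u v = 1)
    & (forall u, 0 < E u)].

(** A timed path given by a finite prefix of states [ss] with residence
    times [ts], after which it stays in the (absorbing) state [gl] forever.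
    [state_at ss ts gl t] is sigma@t: the state s_m for the smallest m with
    t <= t_0 + ... + t_m. *)
Fixpoint state_at (ss : seq S) (ts : seq R) (gl : S) (t : R) : S :=
  match ss, ts with
  | s0 :: ss', t0 :: ts' => if t <= t0 then s0 else state_at ss' ts' gl (t - t0)
  | _, _ => gl
  end.

Fixpoint reward_at (rho : S -> R) (ss : seq S) (ts : seq R) (gl : S) (t : R) : R :=
  match ss, ts with
  | s0 :: ss', t0 :: ts' =>
      if t <= t0 then t * rho s0 else t0 * rho s0 + reward_at rho ss' ts' gl (t - t0)
  | _, _ => t * rho gl
  end.

Definition reach_event (rho : S -> R) (g : S) (r : R) (ss : seq S) (ts : seq R) : Prop :=
  exists t : R, 0 <= t /\ state_at ss ts g t = g /\ reward_at rho ss ts g t <= r.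

(** probability that independent residence times t_i ~ Exp(rates_i)
    satisfy [Ev [:: t_0; ...; t_(n-1)]] (product of exponential laws,
    written as iterated integrals against the exponential densities). *)
Fixpoint time_prob (rates : seq R) (Ev : seq R -> Prop) : \bar R :=
  match rates with
  | [::] => (if `[< Ev [::] >] then 1 else 0)%:E
  | l :: rs => (\int[lebesgue_measure]_(t in [set: R])
                 ((exponential_pdf l t)%:E * time_prob rs (fun ts => Ev (t :: ts))))%E
  end.

Fixpoint path_weight (P : S -> S -> R) (ss : seq S) (g : S) : R :=
  match ss with
  | [::] => 1
  | x :: ss' => P x (head g ss') * path_weight P ss' g
  end.

(** Pr_s(<>_{<= r} g): sum over the first-hitting prefixes s = s_0 ... s_(n-1)
    (all different from g) followed by g, of the probability of the cylinder
    times the probability (over the residence times) of the reachability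
    event. *)
Definition reach_prob (P : S -> S -> R) (E : S -> R) (rho : S -> R)
    (g s : S) (r : R) : \bar R :=
  (\sum_(0 <= n <oo)
     \sum_(ss : n.-tuple S | all (fun x => x != g) ss && (head g ss == s))
       ((path_weight P ss g)%:E * time_prob (map E ss) (reach_event rho g r ss)))%E.

Definition remove_selfloop (P : S -> S -> R) (s : S) : S -> S -> R :=
  fun u v => if u == s then (if v == s then 0 else P s v / (1 - P s s)) else P u v.

End CTMC.

From HB Require Import structures.
From mathcomp Require Import all_boot all_order all_algebra.
From mathcomp Require Import all_classical all_reals all_analysis.
From mathcomp Require Import exponential_distribution measurable_realfun ring.
Set Implicit Arguments. Unset Strict Implicit. Unset Printing Implicit Defensive.
Import Order.TTheory GRing.Theory Num.Theory.
Local Open Scope ring_scope.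

(* Since [g] is absorbing with [rho g > 0], a path s_0 ... s_(n-1) g with
   residence times t_i reaches [g] within reward [r] iff sum_i t_i rho(s_i) < r.
   Visits to [s] collect no reward, so integrating out their residence times
   shows that a path contributes its weight times a quantity depending only on
   the path with [s] deleted.  Both probabilities are therefore values at [s] of
   the least nonnegative solution of the first-passage recurrence
   h(u, F) = sum_v P(u,v) h(v, F after u).  With [s] deleted, a self-loop at [s]
   does not change the observation, and the row of [s] in [P] is the mixture
   P(s,s) [self-loop] + (1 - P(s,s)) [row of [s] in M^*]; hence the solution for
   each chain is a supersolution for the other. *)

Section TimeProb.
Context {R : realType}.
Local Open Scope ereal_scope.

Lemma time_prob_ge0 (rates : seq R) (Ev : seq R -> Prop) :
  all (fun l => 0 <= l)%R rates -> 0 <= time_prob rates Ev.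
Proof.
elim: rates Ev => [|l rs IH] Ev /=; first by case: ifP; rewrite lee_fin.
move=> /andP[l0 rs0]; apply: integral_ge0 => t _.
by apply: mule_ge0; [rewrite lee_fin exponential_pdf_ge0 | exact: IH].
Qed.

Lemma eq_time_prob (rates : seq R) (Ev1 Ev2 : seq R -> Prop) :
  (forall ts, size ts = size rates -> all (fun t => 0 <= t)%R ts ->
     Ev1 ts <-> Ev2 ts) ->
  time_prob rates Ev1 = time_prob rates Ev2.
Proof.
elim: rates Ev1 Ev2 => [|l rs IH] Ev1 Ev2 Ev12 /=.
  by rewrite (_ : `[< Ev1 [::] >] = `[< Ev2 [::] >]) //; apply/asboolP/asboolP; apply Ev12.
apply: eq_integral => t _; have [t_lt0|t_ge0] := ltP t 0%R.
  by rewrite lt0_exponential_pdf // !mul0e.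
congr (_ * _); apply: IH => ts size_ts ts_ge0.
by apply: Ev12; rewrite /= ?size_ts ?t_ge0.
Qed.

Lemma integral_exponential_pdfZr (l : R) (c : \bar R) : (0 < l)%R -> 0 <= c ->
  \int[lebesgue_measure]_(t in [set: R]) ((exponential_pdf l t)%:E * c) = c.
Proof.
move=> l_gt0 c_ge0; rewrite ge0_integralZr //.
- by rewrite integral_exponential_pdf // mul1e.
- by apply/measurable_EFinP; exact: measurable_exponential_pdf.
- by move=> t _; rewrite lee_fin exponential_pdf_ge0 // ltW.
Qed.

End TimeProb.

Section PathReward.
Context {R : realType} {S : finType}.
Variables (rho : S -> R) (g : S).

Fixpoint path_duration (ss : seq S) (ts : seq R) : R :=
  match ss, ts with _ :: ss', t :: ts' => t + path_duration ss' ts' | _, _ => 0 end.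

Fixpoint path_reward (ss : seq S) (ts : seq R) : R :=
  match ss, ts with u :: ss', t :: ts' => t * rho u + path_reward ss' ts' | _, _ => 0 end.

Lemma path_duration_ge0 ss ts : all (fun t => 0 <= t) ts -> 0 <= path_duration ss ts.
Proof.
elim: ss ts => [|u ss IH] [|t ts] //= /andP[t_ge0 ts_ge0].
exact: addr_ge0 t_ge0 (IH _ ts_ge0).
Qed.

Lemma state_at_before ss ts t : ss != [::] -> all (fun u => u != g) ss ->
  size ts = size ss -> t <= path_duration ss ts -> state_at ss ts g t != g.
Proof.
elim: ss ts t => [|u ss IH] [|t0 ts] t //= _ /andP[ug ssg] [size_ts] t_le.
case: ifP => // /negbT; rewrite -ltNge => t0_lt.
have [ss0|ss_neq0] := eqVneq ss [::].
  by move: t_le; rewrite ss0 /= addr0 => /(lt_le_trans t0_lt); rewrite ltxx.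
by apply: IH => //; rewrite lerBlDl.
Qed.

Lemma state_at_after ss ts t : all (fun t => 0 <= t) ts ->
  path_duration ss ts < t -> state_at ss ts g t = g.
Proof.
elim: ss ts t => [|u ss IH] [|t0 ts] t //= /andP[t0_ge0 ts_ge0] lt_t.
rewrite leNgt (le_lt_trans _ lt_t) ?lerDl ?path_duration_ge0 //.
by apply: IH; rewrite // ltrBrDl.
Qed.

Lemma reward_at_after ss ts t : all (fun t => 0 <= t) ts ->
  path_duration ss ts < t ->
  reward_at rho ss ts g t = path_reward ss ts + (t - path_duration ss ts) * rho g.
Proof.
elim: ss ts t => [|u ss IH] [|t0 ts] t //=; rewrite ?add0r ?subr0 //.
move=> /andP[t0_ge0 ts_ge0] lt_t.
rewrite leNgt (le_lt_trans _ lt_t) ?lerDl ?path_duration_ge0 //=.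
by rewrite IH ?ltrBrDl //; ring.
Qed.

(* Once in [g] the reward grows at the positive rate [rho g], so [g] is reached
   within reward [r] exactly when the reward collected before [g] is below [r]. *)
Lemma reach_event_iff r ss ts : 0 < rho g ->
  ss != [::] -> all (fun u => u != g) ss ->
  size ts = size ss -> all (fun t => 0 <= t) ts ->
  reach_event rho g r ss ts <-> path_reward ss ts < r.
Proof.
move=> rho_g_gt0 ss_neq0 ssg size_ts ts_ge0; split.
  move=> [t [_ [st rw]]].
  have lt_t : path_duration ss ts < t.
    rewrite ltNge; apply/negP => /(state_at_before ss_neq0 ssg size_ts).
    by rewrite st eqxx.
  apply: lt_le_trans rw; rewrite reward_at_after // ltrDl.
  by rewrite mulr_gt0 // subr_gt0.
move=> lt_r; set d := (r - path_reward ss ts) / rho g.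
have d_gt0 : 0 < d by rewrite divr_gt0 // subr_gt0.
have lt_t : path_duration ss ts < path_duration ss ts + d by rewrite ltrDl.
exists (path_duration ss ts + d); split.
  exact: addr_ge0 (path_duration_ge0 _ ts_ge0) (ltW d_gt0).
split; first exact: state_at_after.
by rewrite reward_at_after // (addrC (path_duration _ _)) addrK divfK ?gt_eqF // addrC subrK.
Qed.

End PathReward.

Section DropState.
Context {R : realType} {S : finType}.
Variable s : S.

Fixpoint drop_times (ss : seq S) (ts : seq R) : seq R :=
  match ss, ts with
  | u :: ss', t :: ts' => if u == s then drop_times ss' ts' else t :: drop_times ss' ts'
  | _, _ => [::]
  end.

Lemma path_reward_drop_state (rho : S -> R) ss ts : rho s = 0 ->
  path_reward rho ss ts = path_reward rho [seq u <- ss | u != s] (drop_times ss ts).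
Proof.
have reward_nil ss' : path_reward rho ss' [::] = 0 by case: ss'.
move=> rho_s; elim: ss ts => [|u ss IH] [|t ts]; rewrite /= ?reward_nil //.
have [->|_] := eqVneq u s; last by rewrite /= IH.
by rewrite rho_s mulr0 add0r IH.
Qed.

(* The residence times in [s] are integrated out, each against a density of total mass 1. *)
Lemma time_prob_drop_times (E : S -> R) ss (Ev : seq R -> Prop) :
  (forall u, 0 < E u) ->
  time_prob (map E ss) (fun ts => Ev (drop_times ss ts)) =
  time_prob (map E [seq u <- ss | u != s]) Ev.
Proof.
move=> E_gt0; elim: ss Ev => [|u ss IH] Ev //=.
have [->|_] /= := eqVneq u s; last by apply: eq_integral => t _; rewrite -IH.
under eq_integral do rewrite IH.
rewrite integral_exponential_pdfZr // time_prob_ge0 //.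
by apply/allP => _ /mapP[v _ ->]; exact: ltW.
Qed.

End DropState.

Definition reward_below_prob {R : realType} {S : finType}
    (E : S -> R) (rho : S -> R) (r : R) (ss : seq S) : \bar R :=
  time_prob (map E ss) (fun ts => path_reward rho ss ts < r).

Lemma reward_below_prob_ge0 {R : realType} {S : finType} (E rho : S -> R) r ss :
  (forall u, 0 < E u) -> (0 <= reward_below_prob E rho r ss)%E.
Proof. by move=> E_gt0; apply: time_prob_ge0; apply/allP => _ /mapP[u _ ->]; exact: ltW. Qed.

Lemma time_prob_reach_event {R : realType} {S : finType} (E rho : S -> R) (g s : S) r ss :
  (forall u, 0 < E u) -> 0 < rho g -> rho s = 0 ->
  ss != [::] -> all (fun u => u != g) ss ->
  time_prob (map E ss) (reach_event rho g r ss) =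
  reward_below_prob E rho r [seq u <- ss | u != s].
Proof.
move=> E_gt0 rho_g_gt0 rho_s ss_neq0 ssg.
rewrite /reward_below_prob -time_prob_drop_times //.
apply: eq_time_prob => ts; rewrite size_map => size_ts ts_ge0.
by rewrite reach_event_iff // -path_reward_drop_state.
Qed.

Lemma big_tuple_cons (T : finType) (V : Type) (idx : V) (op : Monoid.com_law idx)
    n (f : n.+1.-tuple T -> V) :
  \big[op/idx]_(t : n.+1.-tuple T) f t =
  \big[op/idx]_(x : T) \big[op/idx]_(t : n.-tuple T) f [tuple of x :: t].
Proof.
rewrite pair_big (reindex (fun p : T * n.-tuple T => [tuple of p.1 :: p.2])) //=.
exists (fun t : n.+1.-tuple T => (thead t, [tuple of behead t])).
  by move=> [x t] _; congr pair; exact: val_inj.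
by move=> t _ /=; rewrite -tuple_eta.
Qed.

Section HitExpect.
Context {R : realType} {S : finType}.
Variables (P : S -> S -> R) (g s : S).
Hypothesis P_ge0 : forall u v, 0 <= P u v.
Local Open Scope ereal_scope.

Lemma path_weight_ge0 ss : (0 <= path_weight P ss g)%R.
Proof. by elim: ss => //= u ss IH; rewrite mulr_ge0. Qed.

(* [hit_expect u F] is the expectation of [F], applied to the path with [s]
   deleted, over the paths from [u] that first hit [g]. *)
Definition hit_len (n : nat) (u : S) (F : seq S -> \bar R) : \bar R :=
  \sum_(ss : n.-tuple S | all (fun v => v != g) ss && (head g ss == u))
     ((path_weight P ss g)%:E * F [seq v <- ss | v != s]).

Definition hit_expect (u : S) (F : seq S -> \bar R) : \bar R :=
  \sum_(0 <= n <oo) hit_len n u F.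

Definition obs_cons (u : S) (F : seq S -> \bar R) : seq S -> \bar R :=
  if u == s then F else fun ss => F (u :: ss).

Lemma obs_cons_ge0 u F : (forall ss, 0 <= F ss) -> forall ss, 0 <= obs_cons u F ss.
Proof. by rewrite /obs_cons; case: ifP. Qed.

Lemma hit_len_ge0 n u F : (forall ss, 0 <= F ss) -> 0 <= hit_len n u F.
Proof.
move=> F_ge0; apply: sume_ge0 => ss _.
by apply: mule_ge0; rewrite ?lee_fin ?path_weight_ge0.
Qed.

Lemma hit_len0 u F : hit_len 0 u F = if u == g then F [::] else 0.
Proof.
rewrite /hit_len big_mkcond (big_pred1 [tuple]) /=; last first.
  by move=> t; apply/esym/eqP; exact: tuple0.
by rewrite eq_sym; case: eqP => _ //=; rewrite mul1e.
Qed.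

Lemma hit_lenS n u F : (forall ss, 0 <= F ss) ->
  hit_len n.+1 u F =
  if u == g then 0 else \sum_(v : S) (P u v)%:E * hit_len n v (obs_cons u F).
Proof.
move=> F_ge0; rewrite /hit_len big_mkcond big_tuple_cons /=.
rewrite (bigD1 u) //= [X in _ + X]big1 ?adde0; last first.
  by move=> x /negbTE xu; apply: big1 => t _; rewrite xu andbF.
have [//|ug] := eqVneq u g; first by rewrite big1.
under [RHS]eq_bigr => v _.
  rewrite ge0_sume_distrr => [|t _]; last first.
    by apply: mule_ge0; rewrite ?lee_fin ?path_weight_ge0 ?obs_cons_ge0.
  over.
rewrite /= -big_mkcond (partition_big (fun t : n.-tuple S => head g t) xpredT) //=.
apply: eq_bigr => v _; apply: eq_big => [t|t /andP[_ /eqP <-]]; first by rewrite eqxx andbT.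
rewrite EFinM -muleA /obs_cons /=; congr (_ * (_ * _)).
by case: eqP.
Qed.

Lemma hit_expect_ge0 u F : (forall ss, 0 <= F ss) -> 0 <= hit_expect u F.
Proof. by move=> F_ge0; apply: nneseries_ge0 => n _ _; exact: hit_len_ge0. Qed.

Lemma hit_expectE u F : (forall ss, 0 <= F ss) ->
  hit_expect u F =
  if u == g then F [::] else \sum_(v : S) (P u v)%:E * hit_expect v (obs_cons u F).
Proof.
move=> F_ge0; have obs_ge0 := obs_cons_ge0 u F_ge0.
rewrite /hit_expect nneseries_recl //; last by move=> n _; exact: hit_len_ge0.
rewrite hit_len0 -nneseries_addn; last by move=> n; exact: hit_len_ge0.
under eq_eseriesr do rewrite addn1 hit_lenS //.
case: eqP => _; first by rewrite eseries0 ?adde0.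
rewrite add0e nneseries_sum; last by move=> v n _; rewrite mule_ge0 ?lee_fin ?hit_len_ge0.
apply: eq_bigr => v _; rewrite nneseriesZl // => n _; exact: hit_len_ge0.
Qed.

Lemma obs_cons_skip F : obs_cons s F = F.
Proof. by rewrite /obs_cons eqxx. Qed.

Lemma hit_expect_skip F : (forall ss, 0 <= F ss) -> s != g ->
  hit_expect s F = \sum_(v : S) (P s v)%:E * hit_expect v F.
Proof. by move=> F_ge0 sg; rewrite hit_expectE // (negbTE sg) obs_cons_skip. Qed.

Lemma hit_expect_least (Psi : S -> (seq S -> \bar R) -> \bar R) :
  (forall u F, (forall ss, 0 <= F ss) -> 0 <= Psi u F) ->
  (forall F, (forall ss, 0 <= F ss) -> F [::] <= Psi g F) ->
  (forall u F, (forall ss, 0 <= F ss) -> u != g ->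
     \sum_(v : S) (P u v)%:E * Psi v (obs_cons u F) <= Psi u F) ->
  forall u F, (forall ss, 0 <= F ss) -> hit_expect u F <= Psi u F.
Proof.
move=> Psi_ge0 Psi_g Psi_sub.
have partial_le N u F : (forall ss, 0 <= F ss) ->
    \sum_(0 <= n < N) hit_len n u F <= Psi u F.
  elim: N u F => [|N IH] u F F_ge0; first by rewrite big_geq // Psi_ge0.
  have obs_ge0 := obs_cons_ge0 u F_ge0.
  rewrite big_nat_recl // hit_len0; under eq_bigr do rewrite hit_lenS //.
  have [->|ug] := eqVneq u g; first by rewrite big1 ?adde0 ?Psi_g.
  rewrite add0e exchange_big /=; apply: le_trans (Psi_sub u F F_ge0 ug).
  apply: lee_sum => v _; rewrite -ge0_sume_distrr => [|n _]; last exact: hit_len_ge0.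
  by rewrite lee_wpmul2l ?lee_fin ?IH.
move=> u F F_ge0; apply: lime_le.
  by apply: is_cvg_nneseries => n _ _; exact: hit_len_ge0.
by apply: nearW => N; exact: partial_le.
Qed.

End HitExpect.

Lemma hit_expect_le_row {R : realType} {S : finType} (P Q : S -> S -> R) (g s : S) :
  (forall u v, 0 <= P u v) -> (forall u v, 0 <= Q u v) -> s != g ->
  (forall u, u != s -> P u =1 Q u) ->
  (forall F, (forall ss, 0 <= F ss)%E ->
     \sum_(v : S) (P s v)%:E * hit_expect Q g s v F <= hit_expect Q g s s F)%E ->
  forall u F, (forall ss, 0 <= F ss)%E -> (hit_expect P g s u F <= hit_expect Q g s u F)%E.
Proof.
move=> P_ge0 Q_ge0 sg PQ row_s; apply: hit_expect_least => //.
- by move=> u F F_ge0; exact: hit_expect_ge0.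
- by move=> F F_ge0; rewrite hit_expectE // eqxx.
move=> u F F_ge0 ug; have [->|us] := eqVneq u s.
  by rewrite obs_cons_skip; exact: row_s.
rewrite [leRHS]hit_expectE // (negbTE ug).
by apply: lee_sum => v _; rewrite PQ.
Qed.

Lemma convex_fixpoint_le {R : realType} (p : R) (a d : \bar R) :
  0 <= p -> p < 1 -> (0 <= a)%E -> (0 <= d)%E ->
  a = (p%:E * a + (1 - p)%:E * d)%E -> (d <= a)%E.
Proof.
move=> p_ge0 p_lt1; case: a => [x| |] //= _; last by rewrite leey.
case: d => [y| |] //= _; last by rewrite gt0_muley ?lte_fin ?subr_gt0 // addey.
move=> /eqP; rewrite -!EFinM -EFinD eqe lee_fin => /eqP x_eq.
suff : (1 - p) * (y - x) = 0.
  by move/eqP; rewrite mulf_eq0 subr_eq0 eq_sym lt_eqF //= subr_eq0 => /eqP ->.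
transitivity (p * x + (1 - p) * y - x); first by ring.
by rewrite -x_eq subrr.
Qed.

Section RemoveSelfloop.
Context {R : realType} {S : finType}.
Variables (P : S -> S -> R) (g s : S).
Hypotheses (P_ge0 : forall u v, 0 <= P u v) (Pss_lt1 : P s s < 1) (sg : s != g).
Local Notation P' := (remove_selfloop P s).
Local Open Scope ereal_scope.

Lemma remove_selfloop_ge0 u v : (0 <= P' u v)%R.
Proof.
rewrite /remove_selfloop; case: ifP => // _; case: ifP => // _.
by rewrite divr_ge0 // subr_ge0 ltW.
Qed.

Lemma remove_selfloopE u v : u != s -> P' u v = P u v.
Proof. by rewrite /remove_selfloop => /negbTE ->. Qed.

Lemma remove_selfloop_row (Psi : S -> \bar R) : (forall v, 0 <= Psi v) ->
  \sum_(v : S) (P s v)%:E * Psi v =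
  (P s s)%:E * Psi s + (1 - P s s)%:E * \sum_(v : S) (P' s v)%:E * Psi v.
Proof.
move=> Psi_ge0; have Pss_neq1 : (1 - P s s != 0)%R by rewrite subr_eq0 eq_sym lt_eqF.
rewrite (bigD1 s) //= [X in _ = _ + _ * X](bigD1 s) //=.
rewrite /remove_selfloop eqxx mul0e add0e.
congr (_ + _); rewrite ge0_sume_distrr => [|v /negbTE ->]; last first.
  by rewrite mule_ge0 // lee_fin divr_ge0 // subr_ge0 ltW.
apply: eq_bigr => v /negbTE ->; rewrite muleA -EFinM.
by rewrite mulrC divfK.
Qed.

Lemma hit_expect_le_remove_selfloop u F : (forall ss, 0 <= F ss) ->
  hit_expect P g s u F <= hit_expect P' g s u F.
Proof.
apply: hit_expect_le_row => //; first exact: remove_selfloop_ge0.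
  by move=> v vs w; rewrite remove_selfloopE.
move=> G G_ge0; rewrite remove_selfloop_row; last first.
  by move=> v; exact: hit_expect_ge0 remove_selfloop_ge0 _ _ G_ge0.
rewrite -hit_expect_skip //; last exact: remove_selfloop_ge0.
rewrite -ge0_muleDl ?lee_fin ?subr_ge0 ?(ltW Pss_lt1) //.
by rewrite -EFinD addrC subrK mul1e.
Qed.

Lemma hit_expect_remove_selfloop_le u F : (forall ss, 0 <= F ss) ->
  hit_expect P' g s u F <= hit_expect P g s u F.
Proof.
apply: hit_expect_le_row => //; first exact: remove_selfloop_ge0.
  by move=> v vs w; rewrite remove_selfloopE.
move=> G G_ge0; have Psi_ge0 v : 0 <= hit_expect P g s v G.
  exact: hit_expect_ge0.
(* a = P(s,s) a + (1 - P(s,s)) D at [s], where D is the M^* step from [s]. *)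
apply: (convex_fixpoint_le (P_ge0 s s) Pss_lt1) => //.
  by apply: sume_ge0 => v _; rewrite mule_ge0 ?lee_fin ?remove_selfloop_ge0.
by rewrite -remove_selfloop_row // hit_expect_skip.
Qed.

End RemoveSelfloop.

Lemma reach_prob_hit_expect {R : realType} {S : finType} (P : S -> S -> R)
    (E rho : S -> R) (g s : S) (r : R) :
  (forall u, 0 < E u) -> 0 < rho g -> rho s = 0 -> s != g ->
  reach_prob P E rho g s r = hit_expect P g s s (reward_below_prob E rho r).
Proof.
move=> E_gt0 rho_g_gt0 rho_s sg.
apply: eq_eseriesr => n _; apply: eq_bigr => ss /andP[ssg ss_s].
rewrite (time_prob_reach_event r E_gt0 rho_g_gt0 rho_s) //.
by apply/eqP => ss0; move: ss_s; rewrite ss0 /= eq_sym (negbTE sg).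
Qed.

Theorem lemma5 (R : realType) (S : finType) (P : S -> S -> R) (E : S -> R)
    (rho : S -> R) (g s : S) :
  is_ctmc P E ->
  (forall u, 0 <= rho u) ->
  P g g = 1 -> 0 < rho g ->
  rho s = 0 -> 0 < P s s -> P s s < 1 ->
  forall r : R, 0 <= r ->
    reach_prob P E rho g s r = reach_prob (remove_selfloop P s) E rho g s r.
Proof.
move=> [P_ge0 _ E_gt0] _ Pgg rho_g_gt0 rho_s _ Pss_lt1 r _.
have sg : s != g by apply: contraTneq Pss_lt1 => ->; rewrite Pgg ltxx.
have F_ge0 ss := reward_below_prob_ge0 rho r ss E_gt0.
rewrite !reach_prob_hit_expect //; apply/le_anti/andP; split.
- exact: hit_expect_le_remove_selfloop.
- exact: hit_expect_remove_selfloop_le.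
Qed.
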